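(* Let $n\ge1$, let $G$ be a simple graph on $[n]$, and let $\mathcal{S}_{n,G}$ be the arrangement in $\mathbb{R}^n$ consisting of the hyperplanes $x_i-x_j=0$ for all $1\le i<j\le n$ and $x_i-x_j=1$ for all $1\le i<j\le n$ with $\{i,j\}\in G$. The map $\sigma_{n,G}$ (defined below) is a bijection between the regions of $\mathcal{S}_{n,G}$ and the parking functions $f=(a_1,\ldots,a_n)$ on $[n]$ satisfying the following condition: for every $i$, if there exists $j>i$ with $a_i=a_j$ and $j$ is the smallest such integer, then $\{i,j\}\in G$.
   Context: A region of an arrangement is a connected component of the complement of the union of its hyperplanes. A parking function on $[n]$ is a map $f:[n]\to[n]$, written $(a_1,\ldots,a_n)$ with $a_i=f(i)$, such that $|f^{-1}(\{1,\ldots,j\})|\ge j$ for all $1\le j\le n$. For a region $R$ of $\mathcal{S}_{n,G}$, let $w=w_1\cdots w_n$ be the unique permutation of $[n]$ with $x_{w_1}>\cdots>x_{w_n}$ on $R$; the position of $m$ is the index $p$ with $w_p=m$. Draw an arc from $i$ to $j$ whenever $i<j$, $\{i,j\}\in G$, and $x_i-x_j>1$ holds on $R$. Then remove every arc $(i,l)$ for which there is a different arc $(j,k)$ with $i$ weakly left of $j$ and $k$ weakly left of $l$ in $w$. The remaining arcs partition $[n]$ into chains (connected components) of increasing integers. The map $\sigma_{n,G}$ sends $R$ to $f$ with $f(i)$ equal to the position in $w$ of the leftmost element of the chain containing $i$. *)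

From HB Require Import structures.
From mathcomp Require Import all_boot all_order all_algebra.
From mathcomp Require Import all_classical all_reals all_analysis.
Set Implicit Arguments. Unset Strict Implicit. Unset Printing Implicit Defensive.
Import Order.TTheory GRing.Theory Num.Theory.
Import numFieldNormedType.Exports.
Local Open Scope ring_scope.

(* Points of R^n are row vectors x : 'rV[R]_n, coordinate x_i is x ord0 i;
   the index set [n] = {1..n} is represented by 'I_n = {0..n-1}.
   A simple graph G on [n] is a symmetric irreflexive relation on 'I_n. *)

Section Shi.
Variables (R : realType) (n : nat) (G : rel 'I_n).

Definition shi_complement : set 'rV[R]_n :=
  [set x | forall i j : 'I_n, (i < j)%N ->
     x ord0 i - x ord0 j != 0 /\ (G i j -> x ord0 i - x ord0 j != 1)].

Definition shi_region (x : 'rV[R]_n) : set 'rV[R]_n :=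
  connected_component shi_complement x.

Variable x : 'rV[R]_n.

Definition word : seq 'I_n := sort (fun a b => x ord0 b <= x ord0 a) (enum 'I_n).

Definition pos (m : 'I_n) : nat := (index m word).+1.

Definition arc (i j : 'I_n) : bool :=
  [&& (i < j)%N, G i j & 1 < x ord0 i - x ord0 j].

Definition kept (i l : 'I_n) : bool :=
  arc i l && ~~ [exists j : 'I_n, exists k : 'I_n,
     [&& arc j k, (j, k) != (i, l), (pos i <= pos j)%N & (pos k <= pos l)%N]].

Definition same_chain (i j : 'I_n) : bool :=
  connect (fun a b => kept a b || kept b a) i j.

Definition sigma (i : 'I_n) : nat :=
  \big[minn/n]_(j | same_chain i j) pos j.

End Shi.

Definition parking_function (n : nat) (f : 'I_n -> nat) : Prop :=
  (forall i, (1 <= f i <= n)%N) /\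
  (forall j : nat, (1 <= j <= n)%N -> (j <= #|[set i : 'I_n | (f i <= j)%N]|)%N).

Definition G_compatible (n : nat) (G : rel 'I_n) (f : 'I_n -> nat) : Prop :=
  forall i j : 'I_n, (i < j)%N -> f i = f j ->
    (forall k : 'I_n, (i < k < j)%N -> f k <> f i) -> G i j.

(* On a point x of the complement, sigma only depends on the coordinate order
   [word x] and on the set of arcs; these encode the sides of x with respect to
   all hyperplanes, so they are constant on a region and, since the segment
   between two points with the same sides stays in the complement, they
   determine the region.  The kept arcs form a partial injection increasing both
   in index and in position.  Hence their chains are the level sets of
   f = sigma x, the kept arcs are the links i -> l of f (l is the next index with
   f l = f i), and [word x] is admissible for f: the first occurrence of each
   value v sits at position v, and links point to the right without crossing.
   An admissible word is unique, and the arcs are the edges of G spanning a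
   link, so f determines the region of x.  Conversely, for a parking function
   an admissible word can be built letter by letter, and a point with this
   coordinate order and these arcs comes from a unit interval representation of
   the relation "positions p < q span a link". *)

From Pilot Require Import Defs.
From HB Require Import structures.
From mathcomp Require Import all_boot all_order all_algebra.
From mathcomp Require Import all_classical all_reals all_analysis.
From mathcomp Require Import lra ring zify.
Import Order.TTheory GRing.Theory Num.Theory.
Import numFieldNormedType.Exports.
Set Implicit Arguments. Unset Strict Implicit. Unset Printing Implicit Defensive.

(** * Next occurrences *)

Section Occurrences.
Variables (T : eqType) (n : nat) (f : 'I_n -> T).

Definition next_occ (i l : 'I_n) : bool :=
  [&& i < l, f i == f l & [forall k : 'I_n, (i < k < l) ==> (f k != f i)]].

Definition first_occ (s : 'I_n) : bool :=
  [forall k : 'I_n, (k < s) ==> (f k != f s)].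

Lemma next_occP (i l : 'I_n) :
  reflect [/\ i < l, f i = f l & forall k : 'I_n, i < k < l -> f k != f i]
          (next_occ i l).
Proof.
apply: (iffP and3P) => [[il /eqP fil /forallP mid]|[il fil mid]].
  by split=> // k /(implyP (mid k)).
by split=> //; [exact/eqP | apply/forallP => k; apply/implyP/mid].
Qed.

Lemma next_occ_func (i l l' : 'I_n) : next_occ i l -> next_occ i l' -> l = l'.
Proof.
move=> /next_occP[il fil mid] /next_occP[il' fil' mid'].
case: (ltngtP l l') => [ll'|l'l|/val_inj //].
  by move: (mid' l); rewrite il ll' fil eqxx => /(_ isT).
by move: (mid l'); rewrite il' l'l fil' eqxx => /(_ isT).
Qed.

Lemma next_occ_inj (i i' l : 'I_n) : next_occ i l -> next_occ i' l -> i = i'.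
Proof.
move=> /next_occP[il fil mid] /next_occP[i'l fi'l mid'].
case: (ltngtP i i') => [ii'|i'i|/val_inj //].
  by move: (mid i'); rewrite ii' i'l fil fi'l eqxx => /(_ isT).
by move: (mid' i); rewrite i'i il fil fi'l eqxx => /(_ isT).
Qed.

Lemma first_occ_inj (s s' : 'I_n) : first_occ s -> first_occ s' -> f s = f s' -> s = s'.
Proof.
move=> /forallP first /forallP first' fss'.
case: (ltngtP s s') => [ss'|s's|/val_inj //].
  by move: (first' s); rewrite ss' fss' eqxx.
by move: (first s'); rewrite s's fss' eqxx.
Qed.

Lemma first_occPn (e : 'I_n) : reflect (exists i, next_occ i e) (~~ first_occ e).
Proof.
apply: (iffP idP) => [|[i /next_occP[ie fie _]]]; last first.
  by apply/forallPn; exists i; rewrite ie fie eqxx.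
move=> /forallPn[k]; rewrite negb_imply negbK => /andP[ke fke].
pose earlier (j : 'I_n) := (j < e) && (f j == f e).
have ek : earlier k by rewrite /earlier ke fke.
have [i /andP[ie /eqP fie] imax] := arg_maxnP (fun j : 'I_n => nat_of_ord j) ek.
exists i; apply/next_occP; split=> // j /andP[ij je]; apply/negP => /eqP fj.
by have := imax j; rewrite /earlier je fj fie eqxx => /(_ isT) /=; rewrite leqNgt ij.
Qed.

Lemma exists_first_occ (e : 'I_n) : exists2 s, first_occ s & f s = f e.
Proof.
pose same (j : 'I_n) := f j == f e.
have ee : same e by rewrite /same.
have [s /eqP fs smin] := arg_minnP (fun j : 'I_n => nat_of_ord j) ee.
exists s => //; apply/forallP => k; apply/implyP => ks; apply/eqP => fk.
by have := smin k; rewrite /same fk fs eqxx leqNgt ks => /(_ isT).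
Qed.

Lemma next_occ_ind (Q : 'I_n -> Prop) :
  (forall s, first_occ s -> Q s) -> (forall i l, next_occ i l -> Q i -> Q l) ->
  forall e, Q e.
Proof.
move=> Qfirst Qnext e; have [m] := ubnP e; elim: m e => // m IH e em.
case: (boolP (first_occ e)) => [/Qfirst //|/first_occPn[i ie]].
apply: (Qnext i) => //; apply: IH; have /next_occP[ie' _ _] := ie.
exact: leq_trans ie' em.
Qed.

End Occurrences.

Lemma eq_first_occ (T : eqType) n (f g : 'I_n -> T) :
  next_occ f =2 next_occ g -> first_occ f =1 first_occ g.
Proof.
move=> fg s; apply: negb_inj; apply/first_occPn/first_occPn => -[i il];
  by exists i; rewrite ?fg // -fg.
Qed.

Lemma eq_fun_next_occ (T : eqType) n (f g : 'I_n -> T) :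
  next_occ f =2 next_occ g -> (forall s, first_occ f s -> f s = g s) -> f =1 g.
Proof.
move=> fg first_fg; apply: (next_occ_ind first_fg) => i l fil fgi.
have /next_occP[_ <- _] := fil; rewrite fg in fil.
by have /next_occP[_ <- _] := fil.
Qed.

(** * Chains of a partial injection *)

Lemma connect_first_step (T : finType) (e : rel T) a b :
  connect e a b -> a != b -> exists2 c, e a c & connect e c b.
Proof.
move=> /connectP[[|c p] /= + ->]; first by rewrite eqxx.
by move=> /andP[eac pth] _; exists c => //; apply/connectP; exists p.
Qed.

Lemma connect_last_step (T : finType) (e : rel T) a b :
  connect e a b -> a != b -> exists2 c, connect e a c & e c b.
Proof.
move=> eab ab; have eba : connect [rel x y | e y x] b a by rewrite connect_rev.
rewrite eq_sym in ab; have [c ebc eca] := connect_first_step eba ab.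
by exists c; move: eca; rewrite connect_rev.
Qed.

Section Chains.
Variables (n N : nat) (r : rel 'I_n) (P : 'I_n -> nat).
Hypotheses (r_func : forall i l l', r i l -> r i l' -> l = l')
           (r_inj : forall i i' l, r i l -> r i' l -> i = i')
           (r_incr : forall i l, r i l -> (i < l) && (P i < P l))
           (P_inj : injective P) (P_le : forall i, P i <= N).

Local Notation chain := (connect (fun a b => r a b || r b a)).

Definition chain_min (i : 'I_n) : nat := \big[minn/N]_(j | chain i j) P j.

Lemma connect_incr a b : connect r a b -> (a <= b) && (P a <= P b).
Proof.
move=> /connectP[p + ->]; elim: p a => [|c p IH] a /=; first by rewrite !leqnn.
move=> /andP[/r_incr/andP[ac Pac] /IH/andP[cb Pcb]].
by rewrite (leq_trans (ltnW ac) cb) (leq_trans (ltnW Pac) Pcb).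
Qed.

Lemma chain_sym : connect_sym (fun a b => r a b || r b a).
Proof. by apply: sym_connect_sym => a b; rewrite orbC. Qed.

Lemma chain_total a b : chain a b -> connect r a b || connect r b a.
Proof.
pose S := [pred d | connect r a d || connect r d a].
have S_step c d : r c d || r d c -> c \in S -> d \in S.
  move=> /orP[] rcd /orP[] conn; rewrite inE.
  - by rewrite (connect_trans conn (connect1 rcd)).
  - have [<-|ca] := eqVneq c a; first by rewrite (connect1 rcd).
    have [e rce ea] := connect_first_step conn ca.
    by rewrite (r_func rcd rce) ea orbT.
  - have [->|ac] := eqVneq a c; first by rewrite (connect1 rcd) orbT.
    have [e ae rec] := connect_last_step conn ac.
    by rewrite (r_inj rcd rec) ae.
  - by rewrite (connect_trans (connect1 rcd) conn) orbT.
by move=> /(closed_connect (intro_closed chain_sym S_step)); rewrite !inE connect0 => <-.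
Qed.

Lemma chain_min_le i j : chain i j -> chain_min i <= P j.
Proof. by move=> ij; rewrite /chain_min -minEnat -leEnat; apply: bigmin_le_cond. Qed.

Lemma chain_min_attained i : exists2 m, chain i m & chain_min i = P m.
Proof.
rewrite /chain_min -minEnat.
have [m im ->] :=
  @eq_bigmin _ _ _ N i (fun j => chain i j) P (connect0 _ i) (fun j _ => P_le j).
by exists m.
Qed.

Lemma chain_minE i j : chain i j = (chain_min i == chain_min j).
Proof.
apply/idP/eqP => [ij|].
  by apply: eq_bigl => k; apply/idP/idP => [|/(connect_trans ij)//];
     apply: connect_trans; rewrite chain_sym.
have [mi im ->] := chain_min_attained i; have [mj jm ->] := chain_min_attained j.
by move=> /P_inj mij; apply: connect_trans im _; rewrite chain_sym mij.
Qed.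

Lemma first_occ_chain_min s : first_occ chain_min s -> chain_min s = P s.
Proof.
move=> /forallP first; have [m sm Em] := chain_min_attained s; rewrite Em; congr P.
have /orP[/connect_incr/andP[_ Psm]|/connect_incr/andP[ms _]] := chain_total sm.
  by apply: P_inj; apply/eqP; rewrite eqn_leq Psm andbT -Em chain_min_le ?connect0.
case: (ltngtP m s) ms => // [ms _|/val_inj //].
by move: (first m); rewrite ms -chain_minE chain_sym sm.
Qed.

Lemma next_occ_chain_min : r =2 next_occ chain_min.
Proof.
move=> i l; apply/idP/next_occP => [ril|[il /eqP + mid]].
  have /andP[il _] := r_incr ril.
  split=> //; first by apply/eqP; rewrite -chain_minE connect1 ?ril.
  move=> k /andP[ik kl]; apply/negP; rewrite eq_sym -chain_minE.
  move=> /chain_total/orP[ik'|/connect_incr/andP[]]; last by rewrite leqNgt ik.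
  have [d rid dk] := connect_first_step ik' (negbT (ltn_eqF ik)).
  by move: (connect_incr dk); rewrite -(r_func ril rid) leqNgt kl.
rewrite -chain_minE => /chain_total/orP[il'|/connect_incr/andP[]];
  last by rewrite leqNgt il.
have [d rid dl] := connect_first_step il' (negbT (ltn_eqF il)).
have /andP[dl' _] := connect_incr dl; have /andP[id _] := r_incr rid.
case: (ltngtP d l) dl' => // [{}dl _|/val_inj <- //].
have cid : chain i d by apply: connect1; rewrite rid.
by move: (mid d); rewrite id dl eq_sym -chain_minE cid => /(_ isT).
Qed.

End Chains.

(** * Admissible words *)

Lemma index_take_eq (T : eqType) (s1 s2 : seq T) p x :
  take p s1 = take p s2 -> x \in take p s1 -> index x s1 = index x s2.
Proof.
move=> eq12 x1.
by rewrite -(cat_take_drop p s1) -(cat_take_drop p s2) !index_cat -eq12 x1.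
Qed.

Section Words.
Variable n : nat.

Definition word_pos (w : seq 'I_n) (e : 'I_n) : nat := (index e w).+1.

Lemma mem_full_word (w : seq 'I_n) e : uniq w -> size w = n -> e \in w.
Proof.
move=> uw sw; have [_ ->] := uniq_min_size uw (fun e _ => mem_enum _ e)
  (eq_leq (etrans (size_enum_ord n) (esym sw))).
by rewrite mem_enum.
Qed.

Lemma word_pos_inj (w : seq 'I_n) : {in w &, injective (word_pos w)}.
Proof. by move=> x y xw yw [] /(index_inj x xw yw). Qed.

Lemma word_pos_rcons (w : seq 'I_n) z e :
  e \in w -> word_pos (rcons w z) e = word_pos w e.
Proof. by move=> ew; rewrite /word_pos -cats1 index_cat ew. Qed.

Lemma word_pos_rcons_last (w : seq 'I_n) z :
  z \notin w -> word_pos (rcons w z) z = (size w).+1.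
Proof. by move=> zw; rewrite /word_pos -cats1 index_cat (negbTE zw) /= eqxx addn0. Qed.

Lemma word_pos_mem_le (w : seq 'I_n) e : e \in w -> word_pos w e <= size w.
Proof. by rewrite -index_mem. Qed.

Lemma card_word_pos_le (w : seq 'I_n) j : uniq w -> size w = n -> j <= n ->
  #|[set e | word_pos w e <= j]| = j.
Proof.
move=> uw sw jn; have -> : [set e | word_pos w e <= j] = [set e | e \in take j w].
  by apply/setP => e; rewrite !inE in_take // mem_full_word.
by rewrite cardsE (card_uniqP _) ?take_uniq // size_take sw; case: ltngtP jn.
Qed.

End Words.

Section AdmissibleWords.
Variables (n : nat) (f : 'I_n -> nat).

Record admissible_word (w : seq 'I_n) : Prop := AdmissibleWord {
  admissible_uniq : uniq w;
  admissible_size : size w = n;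
  admissible_first : forall s, first_occ f s -> word_pos w s = f s;
  admissible_next : forall i l, next_occ f i l -> word_pos w i < word_pos w l;
  admissible_noncrossing : forall i l j k, next_occ f i l -> next_occ f j k ->
    word_pos w i < word_pos w j -> word_pos w l < word_pos w k }.

Lemma mem_admissible w e : admissible_word w -> e \in w.
Proof. by case=> uw sw _ _ _; apply: mem_full_word. Qed.

Lemma admissible_pos_le w e : admissible_word w -> word_pos w e <= n.
Proof.
by move=> A; rewrite -[leqRHS](admissible_size A) word_pos_mem_le // (mem_admissible _ A).
Qed.

Lemma admissible_pos_inj w : admissible_word w -> injective (word_pos w).
Proof. by move=> A x y; apply: word_pos_inj; apply: mem_admissible. Qed.

Lemma admissible_pred_in_prefix w w' p c :
  admissible_word w -> admissible_word w' -> take p w = take p w' ->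
  index c w = p -> index c w' != p -> exists2 i, next_occ f i c & i \in take p w.
Proof.
move=> A A' ww' cw cw'.
have /first_occPn[i ic] : ~~ first_occ f c.
  apply: contra cw' => /[dup] /(admissible_first A) + /(admissible_first A').
  by rewrite /word_pos cw => <- [->].
exists i; rewrite // in_take ?(mem_admissible _ A) // -ltnS -cw.
exact: admissible_next A _ _ ic.
Qed.

(* If the letters at position p differ, their predecessors lie in the common
   prefix, and the non-crossing of links puts one of the two letters there. *)
Lemma admissible_word_nth w1 w2 p e0 :
  admissible_word w1 -> admissible_word w2 -> take p w1 = take p w2 -> p < n ->
  nth e0 w1 p = nth e0 w2 p.
Proof.
move=> A1 A2 w12 pn; set a := nth e0 w1 p; set b := nth e0 w2 p.
have a1 : index a w1 = p.
  by rewrite index_uniq ?(admissible_uniq A1) ?(admissible_size A1).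
have b2 : index b w2 = p.
  by rewrite index_uniq ?(admissible_uniq A2) ?(admissible_size A2).
apply/eqP/negPn/negP => ab.
have a2 : index a w2 != p.
  by apply: contra ab; rewrite /b => /eqP <-; rewrite nth_index ?(mem_admissible _ A2).
have b1 : index b w1 != p.
  by apply: contra ab; rewrite /a => /eqP <-; rewrite nth_index ?(mem_admissible _ A1).
have [i ia i1] := admissible_pred_in_prefix A1 A2 w12 a1 a2.
have [j jb j2] := admissible_pred_in_prefix A2 A1 (esym w12) b2 b1.
have notin_prefix c w : admissible_word w -> index c w = p -> c \notin take p w.
  by move=> A cw; rewrite in_take ?(mem_admissible _ A) // cw ltnn.
have ij := index_take_eq w12 i1; have ji := index_take_eq (esym w12) j2.
case: (ltngtP (index i w1) (index j w1)) => [lt_ij|lt_ji|eq_ij].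
- have := admissible_noncrossing A2 ia jb; rewrite /word_pos -ij ji !ltnS b2.
  move=> /(_ lt_ij); rewrite -in_take ?(mem_admissible _ A2) // -w12.
  by rewrite (negbTE (notin_prefix _ _ A1 a1)).
- have := admissible_noncrossing A1 jb ia; rewrite /word_pos !ltnS a1.
  move=> /(_ lt_ji); rewrite -in_take ?(mem_admissible _ A1) // w12.
  by rewrite (negbTE (notin_prefix _ _ A2 b2)).
- have eij := admissible_pos_inj A1 (congr1 S eq_ij).
  by move: jb; rewrite -eij => /(next_occ_func ia) ab'; rewrite ab' eqxx in ab.
Qed.

Lemma admissible_word_unique w1 w2 :
  admissible_word w1 -> admissible_word w2 -> w1 = w2.
Proof.
move=> A1 A2; have take_eq p : p <= n -> take p w1 = take p w2.
  elim: p => [|p IH] pn; first by rewrite !take0.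
  have e0 : 'I_n := Ordinal pn.
  rewrite !(take_nth e0) ?(admissible_size A1) ?(admissible_size A2) //.
  by rewrite (admissible_word_nth e0 A1 A2 (IH (ltnW pn)) pn) IH ?(ltnW pn).
rewrite -(take_size w1) -(take_size w2).
by rewrite (admissible_size A1) (admissible_size A2) take_eq.
Qed.

End AdmissibleWords.

(** * Construction of an admissible word *)

Section WordConstruction.
Variables (n : nat) (f : 'I_n -> nat).
Hypothesis f_parking : parking_function f.

Record partial_word (p : nat) (w : seq 'I_n) : Prop := PartialWord {
  partial_size : size w = p;
  partial_uniq : uniq w;
  partial_first_mem : forall s, first_occ f s -> (s \in w) = (f s <= p);
  partial_first_pos : forall s, first_occ f s -> s \in w -> word_pos w s = f s;
  partial_next : forall i l, next_occ f i l -> l \in w ->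
    (i \in w) && (word_pos w i < word_pos w l);
  partial_fifo : forall i l j k, next_occ f i l -> next_occ f j k -> l \in w -> j \in w ->
    word_pos w j <= word_pos w i -> (k \in w) && (word_pos w k <= word_pos w l) }.

Lemma partial_word0 : partial_word 0 [::].
Proof.
split=> // s _; rewrite in_nil; apply/esym/negbTE; rewrite -ltnNge.
by have [/(_ s)/andP[]] := f_parking.
Qed.

Lemma partial_word_start p w s0 : partial_word p w -> first_occ f s0 -> f s0 = p.+1 ->
  partial_word p.+1 (rcons w s0).
Proof.
move=> [sz uw first_mem first_pos next fifo] s0first fs0.
have s0w : s0 \notin w by rewrite first_mem // fs0 ltnn.
have target_old i l : next_occ f i l -> l \in rcons w s0 -> l \in w.
  move=> il; rewrite mem_rcons inE => /orP[/eqP ls0|//].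
  have : ~~ first_occ f l by apply/first_occPn; exists i.
  by rewrite ls0 s0first.
split.
- by rewrite size_rcons sz.
- by rewrite rcons_uniq s0w.
- move=> s sfirst; rewrite mem_rcons inE first_mem // [f s <= p.+1]leq_eqVlt ltnS -fs0.
  by congr (_ || _); apply/eqP/eqP => [->|/(first_occ_inj sfirst s0first)].
- move=> s sfirst; rewrite mem_rcons inE => /orP[/eqP->|sw].
    by rewrite word_pos_rcons_last // sz.
  by rewrite word_pos_rcons // first_pos.
- move=> i l il /(target_old _ _ il) lw; have /andP[iw il_pos] := next _ _ il lw.
  by rewrite mem_rcons inE iw orbT !word_pos_rcons.
- move=> i l j k il jk /(target_old _ _ il) lw.
  have /andP[iw _] := next _ _ il lw.
  rewrite mem_rcons inE => /orP[/eqP->|jw].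
    rewrite word_pos_rcons_last // word_pos_rcons // sz.
    by rewrite leqNgt ltnS -sz word_pos_mem_le.
  rewrite (word_pos_rcons _ iw) (word_pos_rcons _ jw).
  move=> /(fifo _ _ _ _ il jk lw jw)/andP[kw kl].
  by rewrite mem_rcons inE kw orbT !word_pos_rcons.
Qed.

Lemma partial_word_extend p w j0 k0 : partial_word p w -> (forall e, f e != p.+1) ->
  next_occ f j0 k0 -> j0 \in w -> k0 \notin w ->
  (forall j k, next_occ f j k -> j \in w -> k \notin w ->
     word_pos w j0 <= word_pos w j) ->
  partial_word p.+1 (rcons w k0).
Proof.
move=> [sz uw first_mem first_pos next fifo] no_start jk0 j0w k0w earliest.
have k0first : ~~ first_occ f k0 by apply/first_occPn; exists j0.
have source_old i l : next_occ f i l -> l \in rcons w k0 -> i \in w.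
  move=> il; rewrite mem_rcons inE => /orP[/eqP lk0|/(next _ _ il)/andP[] //].
  by rewrite lk0 in il; rewrite (next_occ_inj il jk0).
have pos_old e : e \in w -> word_pos w e <= p by rewrite -sz; apply: word_pos_mem_le.
split.
- by rewrite size_rcons sz.
- by rewrite rcons_uniq k0w.
- move=> s sfirst; rewrite mem_rcons inE first_mem //.
  rewrite [f s <= p.+1]leq_eqVlt ltnS (negbTE (no_start s)).
  by have -> : (s == k0) = false by apply: contraNF k0first => /eqP <-.
- move=> s sfirst; rewrite mem_rcons inE => /orP[/eqP sk0|sw].
    by move: k0first; rewrite -sk0 sfirst.
  by rewrite word_pos_rcons // first_pos.
- move=> i l il lw'; have iw := source_old _ _ il lw'; rewrite mem_rcons inE iw orbT.
  move: lw'; rewrite mem_rcons inE => /orP[/eqP->|lw].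
    by rewrite word_pos_rcons_last // word_pos_rcons // sz ltnS pos_old.
  by rewrite !word_pos_rcons //; case/andP: (next _ _ il lw).
- move=> i l j k il jk lw' jw' ji; have iw := source_old _ _ il lw'.
  have jw : j \in w.
    move: jw' ji; rewrite mem_rcons inE => /orP[/eqP->|//].
    by rewrite word_pos_rcons_last // word_pos_rcons // sz leqNgt ltnS pos_old.
  move: ji; rewrite (word_pos_rcons _ iw) (word_pos_rcons _ jw) => ji.
  move: lw'; rewrite mem_rcons inE => /orP[/eqP lk0|lw]; last first.
    have /andP[kw kl] := fifo _ _ _ _ il jk lw jw ji.
    by rewrite mem_rcons inE kw orbT !word_pos_rcons.
  rewrite lk0 in il; rewrite lk0 word_pos_rcons_last // sz mem_rcons inE.
  have [kw|kw] := boolP (k \in w).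
    by rewrite orbT word_pos_rcons // ltnW // ltnS pos_old.
  have jj0 : j = j0.
    apply: (word_pos_inj jw j0w); apply/eqP; rewrite eqn_leq (earliest _ _ jk jw kw).
    by rewrite andbT -(next_occ_inj il jk0).
  rewrite jj0 in jk; rewrite (next_occ_func jk jk0).
  by rewrite word_pos_rcons_last // eqxx sz ltnSn.
Qed.

Lemma partial_word_pending p w : p < n -> partial_word p w -> (forall e, f e != p.+1) ->
  exists j, (j \in w) && [exists k, next_occ f j k && (k \notin w)].
Proof.
move=> pn [sz uw first_mem _ _ _] no_start.
apply/existsP; apply: contraT => /existsPn none.
have closed e : f e <= p -> e \in w.
  elim/(next_occ_ind (f:=f)): e => [s sfirst|i l il IH]; first by rewrite first_mem.
  have /next_occP[_ fil _] := il; rewrite -fil => /IH iw.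
  apply: contraT => lw; move: (none i); rewrite iw /=.
  by move=> /existsPn/(_ l); rewrite il lw.
have : #|[set e | f e <= p.+1]| <= p.
  rewrite -[leqRHS]sz -(card_uniqP uw) -cardsE.
  apply/subset_leq_card/fintype.subsetP => e.
  by rewrite !inE leq_eqVlt (negbTE (no_start e)) ltnS => /closed.
have [_ /(_ p.+1)] := f_parking; rewrite ltn0Sn => /(_ pn) /leq_trans/[apply].
by rewrite ltnn.
Qed.

(* The next letter is the first occurrence of the value p.+1 if f takes it,
   and otherwise the successor of the earliest placed letter whose successor
   is missing; the parking condition guarantees that there is one. *)
Lemma partial_word_step p w :
  p < n -> partial_word p w -> exists w', partial_word p.+1 w'.
Proof.
move=> pn pw.
case: (boolP [exists e, f e == p.+1]) => [/existsP[e /eqP fe]|/existsPn no_start].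
  have [s sfirst fs] := exists_first_occ f e.
  by exists (rcons w s); apply: partial_word_start; rewrite // fs.
pose pending j := (j \in w) && [exists k, next_occ f j k && (k \notin w)].
have [j pj] : exists j, pending j := partial_word_pending pn pw no_start.
have [j0 /andP[j0w /existsP[k0 /andP[jk0 k0w]]] earliest] :=
  arg_minnP (word_pos w) pj.
exists (rcons w k0); apply: partial_word_extend jk0 j0w k0w _ => // j1 k jk jw kw.
by apply: earliest; rewrite /pending jw; apply/existsP; exists k; rewrite jk.
Qed.

Lemma partial_word_admissible w : partial_word n w -> admissible_word f w.
Proof.
move=> [sz uw first_mem first_pos next fifo].
have mem e : e \in w := mem_full_word e uw sz.
split=> //.
- by move=> s sfirst; apply: first_pos (mem s).
- by move=> i l il; have /andP[] := next _ _ il (mem l).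
- move=> i l j k il jk ij.
  have /andP[_ lk] := fifo _ _ _ _ jk il (mem k) (mem i) (ltnW ij).
  rewrite ltn_neqAle lk andbT.
  apply: contraTneq ij => /(word_pos_inj (mem l) (mem k)) lk'.
  by rewrite lk' in il; rewrite (next_occ_inj il jk) ltnn.
Qed.

Lemma exists_admissible_word : exists w, admissible_word f w.
Proof.
have partial p : p <= n -> exists w, partial_word p w.
  elim: p => [|p IH] pn; first by exists [::]; apply: partial_word0.
  by have [w pw] := IH (ltnW pn); apply: partial_word_step pw.
by have [w /partial_word_admissible] := partial n (leqnn n); exists w.
Qed.

End WordConstruction.

Local Open Scope ring_scope.

(** * Unit interval representations *)

Section UnitIntervalRealization.
Variables (R : realType) (far : rel nat).
Hypotheses (far_lt : forall p q, far p q -> (p < q)%N)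
  (far_mono : forall p q p' q', far p q -> (p' <= p)%N -> (q <= q')%N -> far p' q').

Definition realizes (N : nat) (t : nat -> R) : Prop :=
  forall p q, (p < q <= N)%N ->
    t p < t q /\ (if far p q then 1 < t q - t p else t q - t p < 1).

Lemma realizes_le N t p q : realizes N t -> (p <= q <= N)%N -> t p <= t q.
Proof.
move=> tN /andP[]; rewrite leq_eqVlt => /orP[/eqP-> //|pq qN].
by have [/ltW] := tN p q (introT andP (conj pq qN)).
Qed.

Lemma realizes_step N t : realizes N t ->
  exists v, realizes N.+1 (fun q => if q == N.+1 then v else t q).
Proof.
(* b is the least position not far from N.+1: the new point must lie to the
   right of t N and (if b > 0) of t b.-1 + 1, and (if b <= N) to the left of
   t b + 1. *)
move=> tN; pose b := (\max_(p < N.+1 | far p N.+1) p.+1)%N.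
have bN : (b <= N.+1)%N by apply/bigmax_leqP => p _; apply: ltn_ord.
have farE p : (p <= N)%N -> far p N.+1 = (p < b)%N.
  move=> pN; apply/idP/idP => [fp|].
    exact: (@leq_bigmax_cond _ (fun p : 'I_N.+1 => far p N.+1) (fun p : 'I_N.+1 => p.+1)
      (Ordinal (pN : (p < N.+1)%N)) fp).
  apply: contraTT => nfp; rewrite -leqNgt; apply/bigmax_leqP => p' fp'.
  by rewrite ltnNge; apply: contra nfp => pp'; apply: far_mono fp' pp' _.
pose lo := if b is b'.+1 then Num.max (t N) (t b' + 1) else t N.
have tN_lo : t N <= lo by rewrite /lo; case: (b) => [|b'] //=; rewrite le_max lexx.
have [v lo_v v_hi] : exists2 v, lo < v & (b <= N)%N -> v < t b + 1.
  case: (leqP b N) => bN'; last by exists (lo + 1) => //; lra.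
  have : lo < t b + 1.
    have tNb : t N < t b + 1.
      case: (ltngtP b N) bN' => // [bN'' _|-> _]; last lra.
      have := tN b N (introT andP (conj bN'' (leqnn N))); rewrite ifF; first lra.
      apply: contraNF (negbT (ltnn b)) => fbN; rewrite -farE ?(ltnW bN'') //.
      exact: far_mono fbN (leqnn _) (leqnSn _).
    rewrite /lo; case: (b) bN' tNb => [|b'] //= bN' tNb.
    rewrite gt_max tNb ltrD2r /=.
    by have [] := tN b' b'.+1 (introT andP (conj (ltnSn _) bN')).
  by move=> lo_hi; exists ((lo + (t b + 1)) / 2) => [|_]; rewrite (midf_lt lo_hi).
exists v => p q /andP[pq qN1]; rewrite (ltn_eqF (leq_trans pq qN1)).
case: (ltngtP q N.+1) pq qN1 => // [qN pq _|-> + _]; first by apply: tN; rewrite pq.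
rewrite ltnS => pN.
have tp_lo : t p <= lo.
  by apply: le_trans tN_lo; apply: realizes_le tN _; rewrite pN leqnn.
split; first exact: le_lt_trans lo_v.
rewrite farE //; case: ifP => pb.
  move: pb bN lo_v; rewrite /lo; case: (b) => [|b'] //= pb bN lo_v.
  have := realizes_le tN (introT andP (conj pb (bN : b' <= N)%N)).
  by move: lo_v; rewrite gt_max => /andP[_]; lra.
have bp : (b <= p)%N by rewrite leqNgt pb.
have := realizes_le tN (introT andP (conj bp pN)); have := v_hi (leq_trans bp pN); lra.
Qed.

Lemma exists_realization N : exists t, realizes N t.
Proof.
elim: N => [|N [t /realizes_step[v tv]]]; last by eexists; exact: tv.
by exists (fun=> 0) => p q /andP[pq]; rewrite leqn0 => /eqP q0; rewrite q0 in pq.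
Qed.

Lemma realizesP N t p q : realizes N t -> (p <= N)%N -> (q <= N)%N ->
  [/\ (t p <= t q) = (p <= q)%N, (1 < t q - t p) = far p q & t q - t p != 1].
Proof.
move=> tN pN qN; have far_ge p' q' : (q' <= p')%N -> far p' q' = false.
  by move=> qp; apply: contraTF qp => /far_lt; rewrite -ltnNge.
case: (ltngtP p q) => [pq|qp|->].
- have [tpq] := tN p q (introT andP (conj pq qN)); rewrite (ltW tpq).
  case: ifP => _ h; split=> //; first by rewrite gt_eqF.
    by apply/negbTE; rewrite -leNgt ltW.
  by rewrite lt_eqF.
- have [tqp _] := tN q p (introT andP (conj qp pN)).
  rewrite leNgt tqp far_ge ?(ltnW qp) //.
  by split=> //; [apply/negbTE; rewrite -leNgt; lra | rewrite lt_eqF //; lra].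
- by rewrite lexx subrr ltr10 eq_sym oner_eq0 far_ge.
Qed.

End UnitIntervalRealization.

Definition link_within n (f : 'I_n -> nat) (w : seq 'I_n) (p q : nat) : bool :=
  [exists j, exists k,
     [&& next_occ f j k, (p <= word_pos w j)%N & (word_pos w k <= q)%N]].

Definition spans_link n (G : rel 'I_n) (f : 'I_n -> nat) (w : seq 'I_n)
    (i l : 'I_n) : bool :=
  [&& (i < l)%N, G i l & link_within f w (word_pos w i) (word_pos w l)].

Lemma G_compatibleP n (G : rel 'I_n) (f : 'I_n -> nat) :
  G_compatible G f <-> (forall i l, next_occ f i l -> G i l).
Proof.
split=> [Gf i l /next_occP[il fil mid]|Gf i l il fil mid].
  by apply: Gf => // k /mid/eqP.
by apply: Gf; apply/next_occP; split=> // k /mid/eqP.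
Qed.

Section Forward.
Variables (R : realType) (n : nat) (G : rel 'I_n) (x : 'rV[R]_n).
Hypothesis Cx : shi_complement G x.

Local Notation X i := (x ord0 i).
Local Notation P := (pos x).
Local Notation arc := (Defs.arc G x).
Local Notation kept := (Defs.kept G x).

Lemma posE : P = word_pos (word x).
Proof. by []. Qed.

Lemma mem_word e : e \in word x.
Proof. by rewrite mem_sort mem_enum. Qed.

Lemma word_uniq : uniq (word x).
Proof. by rewrite sort_uniq enum_uniq. Qed.

Lemma size_word : size (word x) = n.
Proof. by rewrite size_sort size_enum_ord. Qed.

Lemma pos_inj : injective P.
Proof. by move=> i j; apply: word_pos_inj; apply: mem_word. Qed.

Lemma pos_le e : (P e <= n)%N.
Proof. by rewrite -[leqRHS]size_word posE /word_pos index_mem mem_word. Qed.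

Lemma coord_neq (i j : 'I_n) : i != j -> X i != X j.
Proof.
case: (ltngtP i j) => [ij|ji|/val_inj->]; last by rewrite eqxx.
  by have [+ _] := Cx ij; rewrite subr_eq0.
by have [+ _] := Cx ji; rewrite subr_eq0 eq_sym.
Qed.

Lemma coord_leE (a b : 'I_n) : a != b -> (X b <= X a) = (0 < X a - X b).
Proof. by move=> ab; rewrite subr_gt0 lt_neqAle eq_sym coord_neq. Qed.

Lemma pos_ltP (i j : 'I_n) : (P i < P j)%N = (X j < X i).
Proof.
have tr : transitive (fun a b : 'I_n => X b <= X a).
  by move=> c d e /= dc ed; apply: le_trans ed dc.
have srt : sorted (fun a b : 'I_n => X b <= X a) (word x).
  by apply: sort_sorted => c d; apply: le_total.
have le_pos a b : (P a < P b)%N -> X b <= X a.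
  by rewrite ltnS; apply: (sorted_ltn_index tr srt); apply: mem_word.
apply/idP/idP => [ij|ji].
  rewrite lt_neqAle le_pos // andbT coord_neq //.
  by apply: contraTneq ij => ->; rewrite ltnn.
case: (ltngtP (P i) (P j)) => // [/le_pos|/pos_inj ij]; first by rewrite leNgt ji.
by rewrite ij ltxx in ji.
Qed.

Lemma pos_leP (i j : 'I_n) : (P i <= P j)%N = (X j <= X i).
Proof. by rewrite leqNgt pos_ltP -leNgt. Qed.

Lemma arc_pos_lt i l : arc i l -> (P i < P l)%N.
Proof. by move=> /and3P[_ _ il]; rewrite pos_ltP -subr_gt0 (lt_trans ltr01 il). Qed.

Lemma arc_nested i l j k : arc j k -> (P i <= P j)%N -> (P k <= P l)%N ->
  (i < l)%N -> G i l -> arc i l.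
Proof.
move=> /and3P[_ _ jk]; rewrite !pos_leP => ij kl il Gil.
by apply/and3P; split=> //; apply: lt_le_trans jk _; lra.
Qed.

Lemma kept_nested i l j k : kept i l -> arc j k -> (P i <= P j)%N -> (P k <= P l)%N ->
  (j, k) = (i, l).
Proof.
move=> /andP[_ /existsPn nested] jk ij kl; apply/eqP; apply: contraNT (nested j) => ne.
by apply/existsP; exists k; rewrite jk ne ij kl.
Qed.

Lemma kept_incr i l : kept i l -> (i < l)%N && (P i < P l)%N.
Proof. by move=> /andP[/[dup] /arc_pos_lt-> /and3P[->]]. Qed.

Lemma kept_func i l l' : kept i l -> kept i l' -> l = l'.
Proof.
move=> il il'; case: (leqP (P l) (P l')) => ll'.
  by have [] := kept_nested il' (andP il).1 (leqnn _) ll'.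
by have [] := kept_nested il (andP il').1 (leqnn _) (ltnW ll').
Qed.

Lemma kept_inj i i' l : kept i l -> kept i' l -> i = i'.
Proof.
move=> il i'l; case: (leqP (P i) (P i')) => ii'.
  by have [] := kept_nested il (andP i'l).1 ii' (leqnn _).
by have [] := kept_nested i'l (andP il).1 (ltnW ii') (leqnn _).
Qed.

Lemma kept_noncrossing i l j k : kept i l -> kept j k -> (P i < P j)%N -> (P l < P k)%N.
Proof.
move=> il jk ij; rewrite ltnNge; apply/negP => kl.
by have [ji _] := kept_nested il (andP jk).1 (ltnW ij) kl; rewrite ji ltnn in ij.
Qed.

Lemma sigmaE : sigma G x = chain_min n kept P.
Proof. by []. Qed.

Lemma kept_next_occ : kept =2 next_occ (sigma G x).
Proof.
by rewrite sigmaE; apply: next_occ_chain_min kept_func kept_inj kept_incr pos_inj pos_le.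
Qed.

Lemma first_occ_sigma s : first_occ (sigma G x) s -> sigma G x s = P s.
Proof.
exact: (first_occ_chain_min kept_func kept_inj kept_incr pos_inj pos_le (s := s)).
Qed.

Lemma word_admissible : admissible_word (sigma G x) (word x).
Proof.
split; [exact: word_uniq | exact: size_word | by move=> s /first_occ_sigma-> | |].
  by move=> i l; rewrite -kept_next_occ => /kept_incr/andP[].
by move=> i l j k; rewrite -!kept_next_occ; apply: kept_noncrossing.
Qed.

Lemma sigma_le_pos e : (sigma G x e <= P e)%N.
Proof. exact: chain_min_le (connect0 _ e). Qed.

Lemma sigma_parking : parking_function (sigma G x).
Proof.
split=> [i|j /andP[_ jn]].
  rewrite sigmaE; have [m _ ->] := chain_min_attained kept pos_le i.
  by rewrite pos_le andbT.
rewrite -{1}(card_word_pos_le word_uniq size_word jn).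
apply/subset_leq_card/fintype.subsetP => e; rewrite !inE; apply: leq_trans.
exact: sigma_le_pos.
Qed.

Lemma sigma_G_compatible : G_compatible G (sigma G x).
Proof. by apply/G_compatibleP => i l; rewrite -kept_next_occ => /andP[/and3P[]]. Qed.

Lemma arc_kept_within i l : arc i l ->
  exists j k, [/\ kept j k, (P i <= P j)%N & (P k <= P l)%N].
Proof.
move=> il; pose nested (jk : 'I_n * 'I_n) :=
  [&& arc jk.1 jk.2, (P i <= P jk.1)%N & (P jk.2 <= P l)%N].
have nil : nested (i, l) by rewrite /nested /= il !leqnn.
have [[j k] /and3P[/= jk ij kl] jkmin] :=
  arg_minnP (fun jk : 'I_n * 'I_n => P jk.2 - P jk.1)%N nil.
exists j, k; split=> //; rewrite /Defs.kept jk /=.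
apply/existsPn => j'; apply/existsPn => k'.
apply/negP => /and4P[j'k' ne jj' k'k].
have := jkmin (j', k'); rewrite /nested /= j'k' (leq_trans ij jj') (leq_trans k'k kl).
move=> /(_ isT) /= shorter; have j'k'_lt := arc_pos_lt j'k'.
have [ej ek] : P j' = P j /\ P k' = P k by lia.
by move: ne; rewrite (pos_inj ej) (pos_inj ek) eqxx.
Qed.

Lemma arc_spans_link : arc =2 spans_link G (sigma G x) (word x).
Proof.
move=> i l; apply/idP/idP => [il|/and3P[il Gil /existsP[j /existsP[k /and3P[jk ij kl]]]]].
  have /and3P[il' Gil _] := il; rewrite /spans_link il' Gil /=.
  have [j [k [jk ij kl]]] := arc_kept_within il.
  by apply/existsP; exists j; apply/existsP; exists k; rewrite -kept_next_occ jk ij kl.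
by rewrite -kept_next_occ in jk; apply: arc_nested (andP jk).1 ij kl il Gil.
Qed.

End Forward.

(** * Sign vectors and regions *)

Section SignVectors.
Variables (R : realType) (n : nat) (G : rel 'I_n).
Local Open Scope classical_set_scope.

Definition signs_agree (x y : 'rV[R]_n) : Prop :=
  forall i j : 'I_n, (i < j)%N ->
    (0 < x ord0 i - x ord0 j) = (0 < y ord0 i - y ord0 j) /\
    (G i j -> (1 < x ord0 i - x ord0 j) = (1 < y ord0 i - y ord0 j)).

Lemma region_side (x y : 'rV[R]_n) (i j : 'I_n) (c : R) :
  shi_complement G x -> shi_region G x y ->
  (forall z, shi_complement G z -> z ord0 i - z ord0 j != c) ->
  (c < x ord0 i - x ord0 j) = (c < y ord0 i - y ord0 j).
Proof.
move=> Cx xy avoid; set g := fun z : 'rV[R]_n => z ord0 i - z ord0 j.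
have /connected_intervalP gI : connected (g @` shi_region G x).
  apply: connected_continuous_connected; first exact: component_connected.
  by apply: continuous_subspaceT => z; apply: continuousB; apply: coord_continuous.
have gx : (g @` shi_region G x) (g x) by exists x => //; apply: connected_component_refl.
have gy : (g @` shi_region G x) (g y) by exists y.
have notc : ~ (g @` shi_region G x) c.
  by case=> z /connected_component_sub Cz gz; move: (avoid z Cz); rewrite -/(g z) gz eqxx.
have Cy := connected_component_sub xy.
rewrite -/(g x) -/(g y).
case: (ltgtP c (g x)) (avoid x Cx) => // cx _;
  case: (ltgtP c (g y)) (avoid y Cy) => // cy _.
- by case: notc; apply: (gI _ _ gy gx); rewrite !ltW.
- by case: notc; apply: (gI _ _ gx gy); rewrite !ltW.
Qed.

Lemma region_signs_agree x y : shi_complement G x -> shi_region G x y -> signs_agree x y.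
Proof.
move=> Cx xy i j ij; split=> [|Gij]; apply: region_side => // z Cz.
  by have [] := Cz i j ij.
by have [_] := Cz i j ij; apply.
Qed.

Lemma segment_avoids (a b c t : R) : 0 <= t <= 1 ->
  (c < a) = (c < b) -> a != c -> b != c -> a + t * (b - a) != c.
Proof.
move=> /andP[t0 t1] ab ac bc; apply/eqP => dc.
have : (c - a) * (c - b) <= 0.
  rewrite -dc (_ : _ * _ = - (t * (1 - t) * (b - a) ^+ 2)); last by ring.
  by rewrite oppr_le0 mulr_ge0 ?sqr_ge0 // mulr_ge0 // subr_ge0.
rewrite leNgt => /negP; apply; case: (ltP c a) ab => ca /esym cb.
  by rewrite -mulrNN !opprB mulr_gt0 // subr_gt0.
have ac' : a < c by rewrite lt_neqAle ac ca.
have bc' : b < c by rewrite lt_neqAle bc leNgt cb.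
by rewrite mulr_gt0 // subr_gt0.
Qed.

Lemma signs_agree_region x y : shi_complement G x -> shi_complement G y ->
  signs_agree x y -> shi_region G x y.
Proof.
move=> Cx Cy xy; set h := fun t : R => x + t *: (y - x).
have segC : h @` `[0, 1] `<=` shi_complement G.
  move=> _ [t /= t01 <-] i j ij; have t01' : 0 <= t <= 1 by move: t01; rewrite /= in_itv.
  have -> : h t ord0 i - h t ord0 j = (x ord0 i - x ord0 j) +
      t * ((y ord0 i - y ord0 j) - (x ord0 i - x ord0 j)) by rewrite /h !mxE; ring.
  have [[x0 x1] [y0 y1]] := (Cx i j ij, Cy i j ij); have [s0 s1] := xy i j ij.
  by split=> [|Gij]; apply: segment_avoids; rewrite ?s0 ?s1 ?x1 ?y1.
have segI : connected (h @` `[0, 1]).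
  apply: connected_continuous_connected; first exact: segment_connected.
  apply: continuous_subspaceT => t.
  apply: (@continuousD R _ R (fun=> x) (fun t => t *: (y - x))).
    exact: cst_continuous.
  exact: scalel_continuous.
have hx : (h @` `[0, 1]) x.
  by exists 0; rewrite /= ?in_itv /= ?lexx ?ler01 // /h scale0r addr0.
apply: (connected_component_max hx segC segI).
by exists 1; rewrite /= ?in_itv /= ?lexx ?ler01 // /h scale1r addrC subrK.
Qed.

End SignVectors.

Section Surjectivity.
Variables (R : realType) (n : nat) (G : rel 'I_n) (f : 'I_n -> nat) (w : seq 'I_n).
Hypotheses (Aw : admissible_word f w) (f_compat : forall i l, next_occ f i l -> G i l).

Lemma link_within_lt p q : link_within f w p q -> (p < q)%N.
Proof.
move=> /existsP[j /existsP[k /and3P[jk pj kq]]].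
exact: leq_ltn_trans pj (leq_trans (admissible_next Aw jk) kq).
Qed.

Lemma link_within_mono p q p' q' :
  link_within f w p q -> (p' <= p)%N -> (q <= q')%N -> link_within f w p' q'.
Proof.
move=> /existsP[j /existsP[k /and3P[jk pj kq]]] p'p qq'.
apply/existsP; exists j; apply/existsP; exists k.
by rewrite jk (leq_trans p'p pj) (leq_trans kq qq').
Qed.

Variable t : nat -> R.
Hypothesis t_realizes : realizes (link_within f w) n t.

Definition realization_point : 'rV[R]_n := \row_e (- t (word_pos w e)).

Local Notation x := realization_point.

Lemma realization_diff a b : x ord0 a - x ord0 b = t (word_pos w b) - t (word_pos w a).
Proof. by rewrite !mxE opprK addrC. Qed.

Lemma realization_spec a b :
  [/\ (t (word_pos w a) <= t (word_pos w b)) = (word_pos w a <= word_pos w b)%N,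
      (1 < t (word_pos w b) - t (word_pos w a)) =
        link_within f w (word_pos w a) (word_pos w b)
    & t (word_pos w b) - t (word_pos w a) != 1].
Proof.
have [aN bN] := (admissible_pos_le a Aw, admissible_pos_le b Aw).
by have := realizesP link_within_lt t_realizes aN bN.
Qed.

Lemma realization_complement : shi_complement G x.
Proof.
move=> i j ij; rewrite realization_diff; have [le_ij _ ne1] := realization_spec i j.
split=> [|_]; last exact: ne1.
rewrite subr_eq0; apply: contraTneq ij => tij; have [le_ji _ _] := realization_spec j i.
have /(admissible_pos_inj Aw)-> : word_pos w i = word_pos w j.
  by apply/eqP; rewrite eqn_leq -le_ij -le_ji tij lexx.
by rewrite ltnn.
Qed.

Lemma pos_realization e : pos x e = word_pos w e.
Proof.
rewrite -[LHS](card_word_pos_le (word_uniq x) (size_word x) (pos_le x e)).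
rewrite -[RHS](card_word_pos_le (admissible_uniq Aw) (admissible_size Aw)
  (admissible_pos_le e Aw)).
apply: eq_card => d; rewrite !inE -posE (pos_leP realization_complement) !mxE lerN2.
by have [-> _ _] := realization_spec d e.
Qed.

Lemma arc_realization : Defs.arc G x =2 spans_link G f w.
Proof.
move=> a b; rewrite /Defs.arc /spans_link realization_diff.
by have [_ -> _] := realization_spec a b.
Qed.

Lemma link_arc_realization j k : next_occ f j k -> Defs.arc G x j k.
Proof.
move=> jk; have /next_occP[jk' _ _] := jk.
rewrite arc_realization /spans_link jk' f_compat //=.
by apply/existsP; exists j; apply/existsP; exists k; rewrite jk !leqnn.
Qed.

Lemma kept_realization : Defs.kept G x =2 next_occ f.
Proof.
move=> i l; apply/idP/idP => [il|il].
  have := (andP il).1; rewrite arc_realization => /and3P[_ _ /existsP[j /existsP[k]]].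
  rewrite -!pos_realization => /and3P[jk ij kl].
  by have [<- <-] := kept_nested il (link_arc_realization jk) ij kl.
rewrite /Defs.kept link_arc_realization //=; apply/existsPn => j; apply/existsPn => k.
apply/negP => /and4P[+ ne ij kl]; rewrite arc_realization => /and3P[_ _].
move=> /existsP[j' /existsP[k' /and3P[jk' jj' k'k]]]; rewrite !pos_realization in ij kl.
have ij' : word_pos w i = word_pos w j'.
  apply/eqP; rewrite eqn_leq (leq_trans ij jj') leqNgt /=.
  by apply/negP => /(admissible_noncrossing Aw il jk'); rewrite ltnNge (leq_trans k'k kl).
move: jk' jj' k'k; rewrite -(admissible_pos_inj Aw ij') => /(next_occ_func il) <- ji kl'.
have ej : j = i by apply: (admissible_pos_inj Aw); apply/eqP; rewrite eqn_leq ji ij.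
have ek : k = l by apply: (admissible_pos_inj Aw); apply/eqP; rewrite eqn_leq kl kl'.
by rewrite ej ek eqxx in ne.
Qed.

Lemma sigma_realization : sigma G x =1 f.
Proof.
have next_eq : next_occ (sigma G x) =2 next_occ f.
  by move=> i l; rewrite -(kept_next_occ realization_complement) kept_realization.
apply: (eq_fun_next_occ next_eq) => s sfirst.
rewrite (first_occ_sigma realization_complement) // pos_realization.
rewrite (admissible_first Aw) //.
by rewrite -(eq_first_occ next_eq).
Qed.

End Surjectivity.

Lemma sigma_surjective (R : realType) n (G : rel 'I_n) (f : 'I_n -> nat) :
  parking_function f -> G_compatible G f ->
  exists2 x : 'rV[R]_n, shi_complement G x & sigma G x =1 f.
Proof.
move=> pf /G_compatibleP fG; have [w Aw] := exists_admissible_word pf.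
have [t tn] := exists_realization R (@link_within_mono _ f w) n.
exists (realization_point w t); first exact: (realization_complement G Aw tn).
exact: (sigma_realization Aw fG tn).
Qed.


Section RegionsAndSigma.
Variables (R : realType) (n : nat) (G : rel 'I_n).

Lemma signs_agreeE (x y : 'rV[R]_n) : shi_complement G x -> shi_complement G y ->
  signs_agree G x y <-> word x = word y /\ Defs.arc G x = Defs.arc G y.
Proof.
move=> Cx Cy; split=> [xy|[Ew Ea] i j ij].
  split; last first.
    apply/funext => i; apply/funext => l; rewrite /Defs.arc.
    case: (boolP (i < l)%N) => //= il; case: (boolP (G i l)) => //= Gil.
    exact: (xy i l il).2.
  rewrite /word; congr sort; apply/funext => a; apply/funext => b.
  case: (ltngtP a b) => [ab|ba|/val_inj->]; last by rewrite !lexx.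
    have ab' : a != b by rewrite neq_ltn ab.
    by rewrite (coord_leE Cx ab') (coord_leE Cy ab') (xy a b ab).1.
  by move: (xy b a ba).1; rewrite !leNgt !subr_gt0 => ->.
split; first by rewrite !subr_gt0 -(pos_ltP Cx) -(pos_ltP Cy) /pos Ew.
by move=> Gij; move: (congr1 (fun arc => arc i j) Ea); rewrite /Defs.arc ij Gij.
Qed.

Lemma sigma_word_arc (x y : 'rV[R]_n) :
  word x = word y -> Defs.arc G x = Defs.arc G y -> sigma G x = sigma G y.
Proof. by move=> Ew Ea; rewrite /sigma /same_chain /Defs.kept /pos Ew Ea. Qed.

Lemma word_sigma (x y : 'rV[R]_n) : shi_complement G x -> shi_complement G y ->
  sigma G x =1 sigma G y -> word x = word y.
Proof.
move=> Cx Cy /funext E; apply: admissible_word_unique (word_admissible Cx) _.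
by rewrite E; apply: word_admissible.
Qed.

Lemma arc_sigma (x y : 'rV[R]_n) : shi_complement G x -> shi_complement G y ->
  sigma G x =1 sigma G y -> Defs.arc G x = Defs.arc G y.
Proof.
move=> Cx Cy E; apply/funext => i; apply/funext => l.
by rewrite !arc_spans_link // (funext E) (word_sigma Cx Cy E).
Qed.

End RegionsAndSigma.

Local Open Scope classical_set_scope.

Theorem theorem3p1 (R : realType) (n : nat) (G : rel 'I_n) :
  (1 <= n)%N -> symmetric G -> irreflexive G ->
  (* sigma is well defined on regions *)
  (forall x y : 'rV[R]_n, shi_complement G x -> shi_region G x y ->
     sigma G x =1 sigma G y) /\
  (* injective on regions *)
  (forall x y : 'rV[R]_n, shi_complement G x -> shi_complement G y ->
     sigma G x =1 sigma G y -> shi_region G x y) /\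
  (* lands in the G-compatible parking functions *)
  (forall x : 'rV[R]_n, shi_complement G x ->
     parking_function (sigma G x) /\ G_compatible G (sigma G x)) /\
  (* surjective *)
  (forall f : 'I_n -> nat, parking_function f -> G_compatible G f ->
     exists2 x : 'rV[R]_n, shi_complement G x & sigma G x =1 f).
Proof.
move=> _ _ _; split; [|split; [|split]].
- move=> x y Cx xy; have Cy := connected_component_sub xy.
  have [Ew Ea] := (signs_agreeE Cx Cy).1 (region_signs_agree Cx xy).
  by rewrite (sigma_word_arc Ew Ea).
- move=> x y Cx Cy E; apply: (signs_agree_region Cx Cy).
  by apply/(signs_agreeE Cx Cy); split; [exact: word_sigma E | exact: arc_sigma E].
- by move=> x Cx; split; [exact: sigma_parking | exact: sigma_G_compatible].
- exact: sigma_surjective.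
Qed.
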